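(* Let $d\ge1$, let $\pi_0,\pi_1,\dots$ be probability densities on $\mathbb{R}^d$, and for $t\ge1$ let $T_t$ be a Markov kernel on $\mathbb{R}^d$ with $\pi_t$ stationary, $m_t\ge1$ an integer and $Q_t=T_t^{m_t}$. Assume there exist a measurable $V:\mathbb{R}^d\to[1,\infty)$, a constant $C>0$ and $\rho_t\in(0,1)$ such that $\int V^2\pi_t\le C$ for all $t\ge0$ and $$\|T_t(x,\cdot)-\pi_t\|_V\le V(x)\rho_t\quad\text{for all }x\in\mathbb{R}^d,\ t\ge1 .$$ Let $\epsilon_t=\rho_t^{m_t}$ and $\alpha_t=2\sqrt{C}\,d_H(\pi_t,\pi_{t-1})$. Then for every $t\ge1$, $$\|Q_t\circ\cdots\circ Q_1\circ\pi_0-\pi_t\|_1\le\sum_{s=1}^t\Big\{\prod_{u=s}^t\epsilon_u\Big\}\alpha_s .$$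
   Context: $\|\mu\|_V=\sup_{|f|\le V}|\int f\,d\mu|$ for a signed measure $\mu$; $\|\cdot\|_1$ is the $L_1$ (total variation) norm. The Hellinger distance is $d_H(p,q)=\big(\int(\sqrt{p(x)}-\sqrt{q(x)})^2dx\big)^{1/2}$. $T^m$ is the $m$-step kernel and $K\circ p$ denotes the law $A\mapsto\int p(z)K(z,A)\,dz$; $Q_t\circ\cdots\circ Q_1\circ\pi_0$ is the law after running $m_s$ steps of $T_s$ in stages $s=1,\dots,t$ starting from $\pi_0$. *)

From HB Require Import structures.
From mathcomp Require Import all_boot all_order all_algebra.
From mathcomp Require Import all_classical all_reals all_analysis.
Set Implicit Arguments. Unset Strict Implicit. Unset Printing Implicit Defensive.
Import Order.TTheory GRing.Theory Num.Theory.
Local Open Scope classical_set_scope.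
Local Open Scope ring_scope.
Local Open Scope ereal_scope.

Section defs.
Context {dX : measure_display} {X : measurableType dX} {R : realType}.

Definition is_density (mu : {measure set X -> \bar R}) (p : X -> R) : Prop :=
  [/\ measurable_fun setT p, (forall x, 0 <= p x)%R
    & \int[mu]_x (p x)%:E = 1].

Definition dens_int (mu : {measure set X -> \bar R}) (p : X -> R)
  (f : X -> R) : \bar R := \int[mu]_x (f x * p x)%:E.

Definition ker_int (k : R.-ker X ~> X) (x : X) (f : X -> R) : \bar R :=
  \int[k x]_y (f y)%:E.

Definition Vnorm (E1 E2 : (X -> R) -> \bar R) (V : X -> R) : \bar R :=
  ereal_sup [set `|E1 f - E2 f| | f in
     [set f : X -> R | measurable_fun setT f /\ forall x, (`|f x| <= V x)%R]].

Definition stationary (mu : {measure set X -> \bar R}) (k : R.-ker X ~> X)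
  (p : X -> R) : Prop :=
  forall A, measurable A ->
    \int[mu]_x ((p x)%:E * k x A) = \int[mu]_(x in A) (p x)%:E.

Definition hellinger (mu : {measure set X -> \bar R}) (p q : X -> R) : R :=
  Num.sqrt (fine (\int[mu]_x (((Num.sqrt (p x) - Num.sqrt (q x)) ^+ 2)%R)%:E)).

Definition kop (k : R.-ker X ~> X) (f : X -> \bar R) : X -> \bar R :=
  fun x => \int[k x]_y f y.

Definition kpow (k : R.-ker X ~> X) (m : nat) (f : X -> \bar R) : X -> \bar R :=
  iter m (kop k) f.

(* Q_1 (Q_2 (... (Q_t f))) with Q_s = T_s^{m_s} *)
Fixpoint chain (T : nat -> R.-ker X ~> X) (m : nat -> nat) (t : nat)
  (f : X -> \bar R) : X -> \bar R :=
  match t with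
  | 0 => f
  | t'.+1 => chain T m t' (kpow (T t'.+1) (m t'.+1) f)
  end.

(* integration functional of the law Q_t o ... o Q_1 o pi_0 *)
Definition law_int (mu : {measure set X -> \bar R}) (p0 : X -> R)
  (T : nat -> R.-ker X ~> X) (m : nat -> nat) (t : nat) (f : X -> R) : \bar R :=
  \int[mu]_x ((p0 x)%:E * chain T m t (fun y => (f y)%:E) x).

End defs.

Definition box {R : realType} {d : nat} (a b : d.-tuple R) : set (d.-tuple R) :=
  [set x | forall i : 'I_d, (tnth a i < tnth x i <= tnth b i)%R].

(* mu is Lebesgue measure on R^d = d.-tuple R (product Borel sigma-algebra):
   it gives each box its volume; this determines it uniquely. *)
Definition is_lebesgue {R : realType} {d : nat}
  (mu : {measure set (d.-tuple R) -> \bar R}) : Prop :=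
  forall a b : d.-tuple R, (forall i, tnth a i <= tnth b i)%R ->
    mu (box a b) = (\prod_(i < d) (tnth b i - tnth a i))%:E.

From HB Require Import structures.
From mathcomp Require Import all_boot all_order all_algebra.
From mathcomp Require Import all_classical all_reals all_analysis.
From mathcomp Require Import measurable_realfun ring lra.
Import Order.TTheory GRing.Theory Num.Theory.
Local Open Scope classical_set_scope.
Local Open Scope ring_scope.
Set Implicit Arguments. Unset Strict Implicit. Unset Printing Implicit Defensive.

(* Only V-dominated test functions matter, since |f| <= 1 <= V.  Stationarity
   extends from sets to such functions, and the ergodicity bound applied to
   (h - a) / K shows that a step of T_t moves a function within K V of a
   constant to within K rho_t V of the constant pi_t(h); after m_t steps the
   error is K eps_t V.  Replacing pi_t by pi_{t-1} then costs K alpha_t: integrate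
   V |p - q| <= l/2 (sqrt p - sqrt q)^2 + (V^2 p + V^2 q) / l and optimise in l.
   Induction over the stages gives B_t = eps_t (B_{t-1} + alpha_t). *)

Lemma weighted_norm_sub_le (R : realType) (v P Q l : R) :
  0 <= v -> 0 <= P -> 0 <= Q -> 0 < l ->
  v * `|P - Q| <= l / 2 * (Num.sqrt P - Num.sqrt Q) ^+ 2
                  + l^-1 * (v ^+ 2 * P + v ^+ 2 * Q).
Proof.
move=> v0 P0 Q0 l0.
have eP : P = Num.sqrt P ^+ 2 by rewrite sqr_sqrtr.
have eQ : Q = Num.sqrt Q ^+ 2 by rewrite sqr_sqrtr.
set a := Num.sqrt P in eP *; set b := Num.sqrt Q in eQ *.
have a0 : 0 <= a by exact: sqrtr_ge0.
have b0 : 0 <= b by exact: sqrtr_ge0.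
have eD : `|P - Q| = `|a - b| * (a + b).
  by rewrite eP eQ subr_sqr normrM (ger0_norm (addr_ge0 a0 b0)) mulrC.
rewrite eD; set u := `|a - b|.
have u2 : u ^+ 2 = (a - b) ^+ 2 by rewrite /u real_normK// num_real.
rewrite -u2 eP eQ.
(* AM-GM: 2 (l u) (v (a + b)) <= (l u)^2 + v^2 (a + b)^2 <= (l u)^2 + 2 v^2 (a^2 + b^2) *)
have key : l * (v * (u * (a + b))) <=
           l * (l / 2 * u ^+ 2) + (v ^+ 2 * a ^+ 2 + v ^+ 2 * b ^+ 2).
  have h1 : 0 <= (l * u - v * (a + b)) ^+ 2 by exact: sqr_ge0.
  have h2 : 0 <= v ^+ 2 * (a - b) ^+ 2 by rewrite mulr_ge0 ?sqr_ge0.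
  nra.
have li : l * (l^-1 * (v ^+ 2 * a ^+ 2 + v ^+ 2 * b ^+ 2)) =
          v ^+ 2 * a ^+ 2 + v ^+ 2 * b ^+ 2.
  by rewrite mulrA mulfV ?gt_eqF// mul1r.
by rewrite -(ler_pM2l l0) [X in _ <= X]mulrDr li; lra.
Qed.

Lemma le_sqrt_of_forall_AMGM (R : realType) (i H C : R) : 0 <= H -> 0 < C ->
  (forall l, 0 < l -> i <= l / 2 * H + l^-1 * (2 * C)) ->
  i <= 2 * Num.sqrt C * Num.sqrt H.
Proof.
move=> H0 C0 hl.
have sC0 : 0 < Num.sqrt C by rewrite sqrtr_gt0.
have eC : C = Num.sqrt C ^+ 2 by rewrite sqr_sqrtr// ltW.
have [Hp|Hle] := ltP 0 H.
  have sH0 : 0 < Num.sqrt H by rewrite sqrtr_gt0.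
  have eH : H = Num.sqrt H ^+ 2 by rewrite sqr_sqrtr.
  (* the optimal choice l = 2 sqrt C / sqrt H *)
  have := hl (2 * Num.sqrt C / Num.sqrt H).
  rewrite mulr_gt0 ?invr_gt0 ?mulr_gt0// => /(_ isT).
  set a := Num.sqrt C in eC sC0 *; set b := Num.sqrt H in eH sH0 *.
  rewrite [in X in _ <= X -> _]eC [in X in _ <= X -> _]eH.
  have -> : 2 * a / b / 2 * b ^+ 2 + (2 * a / b)^-1 * (2 * a ^+ 2) = 2 * a * b.
    by field; rewrite ?gt_eqF.
  by [].
have H_eq0 : H = 0 by apply/le_anti; rewrite Hle.
rewrite H_eq0 sqrtr0 mulr0 leNgt; apply/negP => ip.
have := hl (4 * C / i); rewrite mulr_gt0 ?invr_gt0 ?mulr_gt0// => /(_ isT).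
rewrite H_eq0 mulr0 add0r.
have -> : (4 * C / i)^-1 * (2 * C) = i / 2 by field; rewrite ?gt_eqF.
lra.
Qed.

Section stationary_integral.
Local Open Scope ereal_scope.
Context d (X : measurableType d) (R : realType).
Variables (mu : {measure set X -> \bar R}) (k : R.-ker X ~> X) (p : X -> R).
Hypotheses (mp : measurable_fun setT p) (p0 : forall x, (0 <= p x)%R)
  (hs : stationary mu k p).

Import HBNNSimple.

Lemma stationary_integral_nnsfun (h : {nnsfun X >-> R}) :
  \int[mu]_x ((p x)%:E * \int[k x]_y (h y)%:E) = \int[mu]_x ((h x)%:E * (p x)%:E).
Proof.
have r0 r : r \in range h -> (0 <= r)%R by rewrite inE => -[x _ <-].
have F0 x r : 0 <= r%:E * ((p x)%:E * k x (h @^-1` [set r])).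
  have [rlt0|rge0] := ltP r 0%R; first by rewrite preimage_nnfun0// measure0 !mule0.
  by rewrite mule_ge0 ?mule_ge0 ?lee_fin.
transitivity (\int[mu]_x (\sum_(r \in range h)
                 (r%:E * ((p x)%:E * k x (h @^-1` [set r]))))).
  apply: eq_integral => x _; rewrite integralT_nnsfun sintegralE ge0_mule_fsumr.
    by apply: eq_fsbigr => r _; rewrite muleCA.
  move=> r; have [rlt0|rge0] := ltP r 0%R.
    by rewrite preimage_nnfun0// measure0 mule0.
  by rewrite mule_ge0 ?mule_ge0 ?lee_fin.
rewrite ge0_integral_fsum//; last first.
  move=> r; apply: measurable_funeM; apply: emeasurable_funM.
    exact/measurable_EFinP.
  exact: measurable_kernel.
transitivity (\int[mu]_x (\sum_(r \in range h)
                 (r%:E * ((\1_(h @^-1` [set r]) x)%:E * (p x)%:E)))); last first.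
  apply: eq_integral => x _; rewrite [in RHS]fimfunE -fsumEFin// ge0_mule_fsuml.
    by apply: eq_fsbigr => r _; rewrite EFinM muleA.
  by move=> r; rewrite nnfun_muleindic_ge0.
rewrite ge0_integral_fsum//; last 2 first.
  - move=> r; apply: measurable_funeM; apply: emeasurable_funM.
      by apply/measurable_EFinP; exact: measurable_indic.
    exact/measurable_EFinP.
  - move=> r x _; have [rlt0|rge0] := ltP r 0%R.
      by rewrite preimage_nnfun0// indic0 mul0e mule0.
    by rewrite mule_ge0 ?mule_ge0 ?lee_fin.
apply: eq_fsbigr => r /r0 rge0.
rewrite ge0_integralZl_EFin//; last 2 first.
  - by move=> x _; rewrite mule_ge0 ?lee_fin.
  - apply: emeasurable_funM; [exact/measurable_EFinP|exact: measurable_kernel].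
rewrite ge0_integralZl_EFin//; last 2 first.
  - by move=> x _; rewrite mule_ge0 ?lee_fin.
  - by apply: emeasurable_funM; apply/measurable_EFinP =>//; exact: measurable_indic.
congr (_ * _); rewrite hs; last first.
  by rewrite -[X in measurable X]setTI; exact: measurable_funP.
rewrite integral_mkcond; apply: eq_integral => x _.
by rewrite /patch /indic; case: ifP; rewrite ?mul1e ?mul0e.
Qed.

Lemma stationary_integral_ge0 (h : X -> \bar R) :
  measurable_fun setT h -> (forall x, 0 <= h x) ->
  \int[mu]_x ((p x)%:E * \int[k x]_y h y) = \int[mu]_x (h x * (p x)%:E).
Proof.
move=> mh h0; pose h_ := nnsfun_approx measurableT mh.
have hn x : h x = limn (fun n => (h_ n x)%:E).
  by apply/esym/cvg_lim => //; exact: cvg_nnsfun_approx.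
have ndn x : {homo (fun n => (h_ n x)%:E) : n m / (n <= m)%N >-> n <= m}.
  by move=> a b ab; rewrite lee_fin; exact/lefP/nd_nnsfun_approx.
have mhn n : measurable_fun setT (fun x => (h_ n x)%:E) by exact/measurable_EFinP.
have kint x : \int[k x]_y h y = limn (fun n => \int[k x]_y (h_ n y)%:E).
  rewrite -monotone_convergence//; try by move=> y _; exact: ndn.
    by apply: eq_integral => y _; exact: hn.
  by move=> ? ? ?; rewrite lee_fin.
have kcvg x : cvgn (fun n => \int[k x]_y (h_ n y)%:E).
  apply/cvg_ex; eexists; apply: cvg_monotone_convergence => //.
  by move=> ? ? ?; rewrite lee_fin.
transitivity (\int[mu]_x limn (fun n => (p x)%:E * \int[k x]_y (h_ n y)%:E)).
  by apply: eq_integral => x _; rewrite kint limeMl ?kcvg.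
rewrite monotone_convergence//; last 3 first.
  - move=> n; apply: emeasurable_funM; first exact/measurable_EFinP.
    apply: measurable_fun_integral_kernel => //; first exact: measurable_kernel.
    by move=> y; rewrite lee_fin.
  - by move=> n x _; rewrite mule_ge0 ?lee_fin// integral_ge0// => y _; rewrite lee_fin.
  - move=> x _ a b ab; apply: lee_wpmul2l; first by rewrite lee_fin.
    apply: ge0_le_integral => //; try by move=> y _; rewrite lee_fin.
    by move=> y _; exact: ndn.
transitivity (limn (fun n => \int[mu]_x ((h_ n x)%:E * (p x)%:E))).
  by apply: congr_lim; apply/funext => n; exact: stationary_integral_nnsfun.
rewrite -monotone_convergence//.
- apply: eq_integral => x _; rewrite muleC hn -limeMl//.
    by apply: congr_lim; apply/funext => n; rewrite muleC.
  by apply/cvg_ex; eexists; apply: ereal_nondecreasing_cvgn; exact: ndn.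
- by move=> n; apply: emeasurable_funM => //; exact/measurable_EFinP.
- by move=> n x _; rewrite mule_ge0 ?lee_fin.
- by move=> x _ a b ab; apply: lee_wpmul2r; [rewrite lee_fin|exact: ndn].
Qed.

End stationary_integral.

Lemma abse_subEFin_le (R : realType) (a : \bar R) (b c : R) :
  (`|a - b%:E| <= c%:E)%E -> exists r, a = r%:E /\ `|r - b| <= c.
Proof.
case: a => [r||] /=; last 2 first.
- by rewrite leye_eq.
- by rewrite leye_eq.
by move=> h; exists r; split => //; rewrite -lee_fin.
Qed.

Lemma Vnorm_ge d (X : measurableType d) (R : realType)
    (E1 E2 : (X -> R) -> \bar R) (W f : X -> R) :
  measurable_fun setT f -> (forall x, `|f x| <= W x) ->
  (`|E1 f - E2 f| <= Vnorm E1 E2 W)%E.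
Proof. by move=> mf hf; apply: ereal_sup_ubound; exists f. Qed.

Section geometric_ergodicity.
Local Open Scope ereal_scope.
Context d (X : measurableType d) (R : realType).
Variables (mu : {measure set X -> \bar R}) (pi : nat -> X -> R)
  (T : nat -> R.-pker X ~> X) (m : nat -> nat) (V : X -> R) (C : R)
  (rho : nat -> R).
Hypotheses (hpi : forall t, is_density mu (pi t))
  (hstat : forall t, (1 <= t)%N -> stationary mu (T t) (pi t))
  (hVm : measurable_fun setT V) (hV1 : forall x, (1 <= V x)%R) (hC : (0 < C)%R)
  (hrho : forall t, (1 <= t)%N -> (0 < rho t < 1)%R)
  (hV2 : forall t, \int[mu]_x ((V x ^+ 2 * pi t x)%:E) <= C%:E)
  (hgeo : forall t x, (1 <= t)%N ->
     Vnorm (ker_int (T t) x) (dens_int mu (pi t)) V <= (V x * rho t)%:E).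

Lemma V_ge0 x : (0 <= V x)%R. Proof. exact: le_trans (hV1 x). Qed.
Lemma pi_ge0 t x : (0 <= pi t x)%R. Proof. by case: (hpi t). Qed.
Lemma measurable_pi t : measurable_fun setT (pi t). Proof. by case: (hpi t). Qed.
Lemma integral_pi t : \int[mu]_x (pi t x)%:E = 1. Proof. by case: (hpi t). Qed.

Lemma integral_Vpi_le t : \int[mu]_x ((V x * pi t x)%:E) <= C%:E.
Proof.
apply: le_trans (hV2 t); apply: ge0_le_integral => //.
- by move=> x _; rewrite lee_fin mulr_ge0 ?V_ge0 ?pi_ge0.
- by apply/measurable_EFinP; apply: measurable_funM => //; exact: measurable_pi.
- apply/measurable_EFinP; apply: measurable_funM; last exact: measurable_pi.
  exact: measurable_funX.
- by move=> x _; rewrite lee_fin ler_wpM2r ?pi_ge0// expr2 ler_peMl ?V_ge0.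
Qed.

Lemma integrable_le_Vpi t (f : X -> \bar R) (K : R) : (0 <= K)%R ->
  measurable_fun setT f -> (forall x, `|f x| <= (K * (V x * pi t x))%:E) ->
  mu.-integrable setT f.
Proof.
move=> K0 mf hf.
apply: (le_integrable measurableT (g := fun x => (K * (V x * pi t x))%:E) mf).
  move=> x _; apply: le_trans (hf x) _.
  by rewrite gee0_abs// lee_fin mulr_ge0// mulr_ge0 ?V_ge0 ?pi_ge0.
apply/integrableP; split.
  apply/measurable_EFinP; apply: measurable_funM => //.
  by apply: measurable_funM => //; exact: measurable_pi.
under eq_integral => x _ do rewrite gee0_abs ?lee_fin ?mulr_ge0 ?V_ge0 ?pi_ge0// EFinM.
rewrite ge0_integralZl_EFin//.
- apply: le_lt_trans (lee_wpmul2l _ (integral_Vpi_le t)) _; first by rewrite lee_fin.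
  by rewrite -EFinM ltry.
- by move=> x _; rewrite lee_fin mulr_ge0 ?V_ge0 ?pi_ge0.
- by apply/measurable_EFinP; apply: measurable_funM => //; exact: measurable_pi.
Qed.

Lemma integrable_pi t : mu.-integrable setT (fun x => (pi t x)%:E).
Proof.
apply: (@integrable_le_Vpi t _ 1) => //; first exact/measurable_EFinP/measurable_pi.
by move=> x; rewrite /= lee_fin mul1r ger0_norm ?pi_ge0// ler_peMl ?pi_ge0 ?hV1.
Qed.

(* The drift bound [T V <= rho V + pi(V) <= (1 + C) V] is read off the
   geometric ergodicity hypothesis applied to f = V. *)
Lemma ker_integral_V_le t x : (1 <= t)%N ->
  \int[T t x]_y (V y)%:E <= ((1 + C) * V x)%:E.
Proof.
move=> t1.
have piV0 : 0 <= dens_int mu (pi t) V.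
  by apply: integral_ge0 => y _; rewrite lee_fin mulr_ge0 ?V_ge0 ?pi_ge0.
have piVC : dens_int mu (pi t) V <= C%:E by exact: integral_Vpi_le.
have piV_fin : dens_int mu (pi t) V \is a fin_num.
  by rewrite ge0_fin_numE// (le_lt_trans piVC)// ltry.
have normV y : (`|V y| <= V y)%R by rewrite ger0_norm ?V_ge0.
have := le_trans (Vnorm_ge (ker_int (T t) x) (dens_int mu (pi t)) hVm normV)
  (hgeo x t1).
rewrite -(fineK piV_fin) /ker_int => /abse_subEFin_le[r [-> hr]].
rewrite lee_fin; move: hr; rewrite ler_norml => /andP[_ hr].
have /andP[r0 r1] := hrho t1; have h1 := hV1 x.
have : (fine (dens_int mu (pi t) V) <= C)%R by rewrite -lee_fin fineK.
have : (V x * rho t <= V x)%R by rewrite ler_piMr ?V_ge0 ?ltW.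
have : (C <= C * V x)%R by rewrite ler_peMr // ltW.
lra.
Qed.

Lemma integrable_ker_le_V t x (f : X -> \bar R) (K : R) : (1 <= t)%N -> (0 <= K)%R ->
  measurable_fun setT f -> (forall y, `|f y| <= (K * V y)%:E) ->
  (T t x).-integrable setT f.
Proof.
move=> t1 K0 mf hf.
apply: (le_integrable measurableT (g := fun y => (K * V y)%:E) mf).
  by move=> y _; apply: le_trans (hf y) _; rewrite gee0_abs// lee_fin mulr_ge0 ?V_ge0.
apply/integrableP; split; first by apply/measurable_EFinP; apply: measurable_funM.
under eq_integral => y _ do rewrite gee0_abs ?lee_fin ?mulr_ge0 ?V_ge0// EFinM.
rewrite ge0_integralZl_EFin//.
- apply: le_lt_trans (lee_wpmul2l _ (ker_integral_V_le x t1)) _; first by rewrite lee_fin.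
  by rewrite -EFinM ltry.
- by move=> y _; rewrite lee_fin V_ge0.
- exact/measurable_EFinP.
Qed.

Definition Vdominated (h : X -> R) (K : R) :=
  [/\ (0 <= K)%R, measurable_fun setT h & forall x, (`|h x| <= K * V x)%R].

(* [fine] sends infinite integrals to 0; these are only applied to
   V-dominated functions, whose integrals are finite. *)
Definition kopR t (h : X -> R) x : R := fine (\int[T t x]_y (h y)%:E).
Definition densR t (h : X -> R) : R := fine (dens_int mu (pi t) h).

Lemma Vdominated_cst (a : R) : Vdominated (fun=> a) `|a|.
Proof. by split=> // x; rewrite ler_peMr ?hV1. Qed.

Lemma Vdominated_shift (h : X -> R) (a K : R) : (0 <= K)%R -> measurable_fun setT h ->
  (forall x, `|h x - a| <= K * V x)%R -> Vdominated h (`|a| + K).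
Proof.
move=> K0 mh hh; split => //; first by rewrite addr_ge0.
move=> x; rewrite mulrDl -[h x](subrK a) addrC.
by apply: le_trans (ler_normD _ _) _; rewrite lerD ?hh// ler_peMr ?hV1.
Qed.

Lemma integrable_ker_Vdominated t x h K : (1 <= t)%N -> Vdominated h K ->
  (T t x).-integrable setT (fun y => (h y)%:E).
Proof.
move=> t1 [K0 mh hh]; apply: (integrable_ker_le_V x t1 K0).
  exact/measurable_EFinP.
by move=> y; rewrite /= lee_fin.
Qed.

Lemma integrable_dens_Vdominated t h K : Vdominated h K ->
  mu.-integrable setT (fun x => (h x * pi t x)%:E).
Proof.
move=> [K0 mh hh]; apply: (@integrable_le_Vpi t _ K K0).
  by apply/measurable_EFinP; apply: measurable_funM => //; exact: measurable_pi.
move=> x; rewrite /= lee_fin normrM (ger0_norm (pi_ge0 t x)) mulrA.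
by rewrite ler_wpM2r ?pi_ge0 ?hh.
Qed.

Lemma ker_integralE t x h K : (1 <= t)%N -> Vdominated h K ->
  \int[T t x]_y (h y)%:E = (kopR t h x)%:E.
Proof.
move=> t1 hb; rewrite /kopR fineK//; apply: integrable_fin_num => //.
exact: integrable_ker_Vdominated hb.
Qed.

Lemma dens_intE t h K : Vdominated h K -> dens_int mu (pi t) h = (densR t h)%:E.
Proof.
move=> hb; rewrite /densR fineK//; apply: integrable_fin_num => //.
exact: integrable_dens_Vdominated hb.
Qed.

Lemma measurable_kopR t h K : (1 <= t)%N -> Vdominated h K ->
  measurable_fun setT (kopR t h).
Proof.
move=> t1 [K0 mh hh].
have mEh : measurable_fun setT (EFin \o h) by exact/measurable_EFinP.
have -> : kopR t h = fun x => fine (\int[T t x]_y ((EFin \o h)^\+ y) -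
                                   \int[T t x]_y ((EFin \o h)^\- y)).
  by apply/funext => x; rewrite /kopR integralE.
apply: (measurableT_comp (fine_measurable measurableT)).
apply: emeasurable_funB; apply: measurable_fun_integral_kernel.
- exact: measurable_kernel.
- by move=> y; exact: funepos_ge0.
- exact: measurable_funepos.
- exact: measurable_kernel.
- by move=> y; exact: funeneg_ge0.
- exact: measurable_funeneg.
Qed.

Lemma Vdominated_kopR t h K : (1 <= t)%N -> Vdominated h K ->
  Vdominated (kopR t h) (K * (1 + C)).
Proof.
move=> t1 hb; have [K0 mh hh] := hb; split.
- by rewrite mulr_ge0// addr_ge0// ltW.
- exact: measurable_kopR hb.
move=> x; rewrite -lee_fin -abse_EFin -(ker_integralE x t1 hb).
apply: le_trans (le_abse_integral _ _ _) _ => //; first exact/measurable_EFinP.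
apply: le_trans (@ge0_le_integral _ _ _ (T t x) setT measurableT _
  (fun y => K%:E * (V y)%:E) _ _ _ _) _.
- by [].
- by apply: measurableT_comp => //; exact/measurable_EFinP.
- by apply: measurable_funeM; exact/measurable_EFinP.
- by move=> y _; rewrite /= -EFinM lee_fin.
rewrite ge0_integralZl_EFin//; last 2 first.
- by move=> y _; rewrite lee_fin V_ge0.
- exact/measurable_EFinP.
by rewrite -mulrA EFinM lee_wpmul2l ?lee_fin// ker_integral_V_le.
Qed.

Lemma kopR_linear t x h1 h2 K1 K2 (c : R) : (1 <= t)%N ->
  Vdominated h1 K1 -> Vdominated h2 K2 ->
  kopR t (fun y => h1 y + c * h2 y)%R x = (kopR t h1 x + c * kopR t h2 x)%R.
Proof.
move=> t1 hb1 hb2; rewrite {1}/kopR.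
under eq_integral => y _ do rewrite EFinD EFinM.
rewrite integralD//; last 2 first.
- exact: integrable_ker_Vdominated hb1.
- by apply: integrableZl => //; exact: integrable_ker_Vdominated hb2.
rewrite integralZl//; last exact: integrable_ker_Vdominated hb2.
by rewrite (ker_integralE x t1 hb1) (ker_integralE x t1 hb2) -EFinM -EFinD.
Qed.

Lemma densR_linear t h1 h2 K1 K2 (c : R) : Vdominated h1 K1 -> Vdominated h2 K2 ->
  densR t (fun y => h1 y + c * h2 y)%R = (densR t h1 + c * densR t h2)%R.
Proof.
move=> hb1 hb2; rewrite {1}/densR /dens_int.
under eq_integral => y _ do rewrite mulrDl -mulrA EFinD (EFinM c).
rewrite integralD//; last 2 first.
- exact: integrable_dens_Vdominated hb1.
- by apply: integrableZl => //; exact: integrable_dens_Vdominated hb2.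
rewrite integralZl//; last exact: integrable_dens_Vdominated hb2.
rewrite -!/(dens_int mu (pi t) _) (dens_intE t hb1) (dens_intE t hb2).
by rewrite -EFinM -EFinD.
Qed.

Lemma kopR_cst t x (a : R) : kopR t (fun=> a) x = a.
Proof. by rewrite /kopR integral_cst// prob_kernel mule1. Qed.

Lemma densR_cst t (a : R) : densR t (fun=> a) = a.
Proof.
rewrite /densR /dens_int; under eq_integral => y _ do rewrite EFinM.
by rewrite integralZl ?integral_pi ?mule1//; exact: integrable_pi.
Qed.

Lemma kopR_affine t x h K (a b : R) : (1 <= t)%N -> Vdominated h K ->
  kopR t (fun y => a + b * h y)%R x = (a + b * kopR t h x)%R.
Proof.
by move=> t1 hb; rewrite (kopR_linear _ _ t1 (Vdominated_cst a) hb) kopR_cst.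
Qed.

Lemma densR_affine t h K (a b : R) : Vdominated h K ->
  densR t (fun y => a + b * h y)%R = (a + b * densR t h)%R.
Proof. by move=> hb; rewrite (densR_linear _ _ (Vdominated_cst a) hb) densR_cst. Qed.

Lemma densR_kopR_ge0 t f K : (1 <= t)%N -> Vdominated f K -> (forall x, 0 <= f x)%R ->
  densR t (kopR t f) = densR t f.
Proof.
move=> t1 hb f0; have [_ mf _] := hb.
have mEf : measurable_fun setT (EFin \o f) by exact/measurable_EFinP.
have := stationary_integral_ge0 (measurable_pi t) (pi_ge0 t) (hstat t1) mEf
  (fun y => f0 y).
rewrite /densR /dens_int.
under eq_integral => x _ do rewrite (ker_integralE x t1 hb) -EFinM mulrC.
by move=> ->; under eq_integral => x _ do rewrite -EFinM.
Qed.

(* stationarity extends to V-dominated functions by writing h = (h + K V) - K V *)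
Lemma densR_kopR t h K : (1 <= t)%N -> Vdominated h K -> densR t (kopR t h) = densR t h.
Proof.
move=> t1 hb; have [K0 mh hh] := hb.
have hbV : Vdominated V 1 by split => // x; rewrite mul1r ger0_norm ?V_ge0.
pose f := fun y => (h y + K * V y)%R.
have hbf : Vdominated f (K + K).
  split; first by rewrite addr_ge0.
  - by apply: measurable_funD => //; exact: measurable_funM.
  - move=> x; rewrite /f mulrDl; apply: le_trans (ler_normD _ _) _.
    by rewrite lerD// normrM (ger0_norm K0) ger0_norm ?V_ge0.
have f0 x : (0 <= f x)%R by have := hh x; rewrite /f ler_norml => /andP[? _]; lra.
have eh : h = (fun y => f y + (- K) * V y)%R.
  by apply/funext => y; rewrite /f mulNr addrK.
have ek : kopR t h = (fun x => kopR t f x + (- K) * kopR t V x)%R.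
  by apply/funext => x; rewrite {1}eh (kopR_linear _ _ t1 hbf hbV).
rewrite ek (densR_linear _ _ (Vdominated_kopR t1 hbf) (Vdominated_kopR t1 hbV)).
rewrite (densR_kopR_ge0 t1 hbf f0) (densR_kopR_ge0 t1 hbV V_ge0).
by rewrite [in RHS]eh (densR_linear _ _ hbf hbV).
Qed.

Lemma kopR_contract t (h : X -> R) (a K : R) : (1 <= t)%N -> (0 < K)%R ->
  measurable_fun setT h -> (forall x, `|h x - a| <= K * V x)%R ->
  forall x, (`|kopR t h x - densR t h| <= K * rho t * V x)%R.
Proof.
move=> t1 K0 mh hh x.
pose r := fun y => ((h y - a) / K)%R.
have mr : measurable_fun setT r by apply: measurable_funM => //; exact: measurable_funB.
have hr y : (`|r y| <= V y)%R.
  by rewrite /r normrM normfV (gtr0_norm K0) ler_pdivrMr// mulrC.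
have hbr : Vdominated r 1 by split => // y; rewrite mul1r.
have eh : h = (fun y => a + K * r y)%R.
  by apply/funext => y; rewrite /r mulrC -mulrA mulVf ?gt_eqF// mulr1 addrC subrK.
have := le_trans (Vnorm_ge (ker_int (T t) x) (dens_int mu (pi t)) mr hr) (hgeo x t1).
rewrite /ker_int (ker_integralE x t1 hbr) (dens_intE t hbr) -EFinB /= lee_fin => H.
rewrite eh (kopR_affine _ _ _ t1 hbr) (densR_affine _ _ _ hbr).
rewrite opprD addrACA subrr add0r -mulrBr normrM (gtr0_norm K0).
by rewrite -mulrA ler_pM2l// mulrC.
Qed.

Lemma Vdominated_iter_kopR t n h K : (1 <= t)%N -> Vdominated h K ->
  Vdominated (iter n (kopR t) h) (K * (1 + C) ^+ n).
Proof.
move=> t1 hb; elim: n => [|n IH]; first by rewrite expr0 mulr1.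
by rewrite iterS exprSr mulrA; exact: Vdominated_kopR.
Qed.

Lemma densR_iter_kopR t n h K : (1 <= t)%N -> Vdominated h K ->
  densR t (iter n (kopR t) h) = densR t h.
Proof.
move=> t1 hb; elim: n => [//|n IH].
by rewrite iterS (densR_kopR t1 (Vdominated_iter_kopR n t1 hb)).
Qed.

Lemma iter_kopR_contract t n (h : X -> R) (a K : R) : (1 <= t)%N -> (0 < n)%N ->
  (0 < K)%R -> measurable_fun setT h -> (forall x, `|h x - a| <= K * V x)%R ->
  forall x, (`|iter n (kopR t) h x - densR t h| <= K * rho t ^+ n * V x)%R.
Proof.
move=> t1 + K0 mh hh; have hb := Vdominated_shift (ltW K0) mh hh.
elim: n => [//|[_ _|n IH _]]; first by move=> x; rewrite expr1; exact: kopR_contract.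
have [_ mg _] := Vdominated_iter_kopR n.+1 t1 hb.
have /andP[r0 _] := hrho t1.
have Kp : (0 < K * rho t ^+ n.+1)%R by rewrite mulr_gt0// exprn_gt0.
move=> x; have := kopR_contract t1 Kp mg (IH isT) x.
by rewrite (densR_iter_kopR _ t1 hb) -iterS [in X in _ -> X]exprSr mulrA.
Qed.

Lemma kpowE t n h K : (1 <= t)%N -> Vdominated h K ->
  kpow (T t) n (fun y => (h y)%:E) = (fun y => (iter n (kopR t) h y)%:E).
Proof.
move=> t1 hb; elim: n => [//|n IH].
rewrite /kpow iterS -/(kpow (T t) n _) IH; apply/funext => x.
by rewrite /kop (ker_integralE x t1 (Vdominated_iter_kopR n t1 hb)).
Qed.

Lemma integral_sqr_sub_sqrt_pi t s :
  \int[mu]_x (((Num.sqrt (pi t x) - Num.sqrt (pi s x)) ^+ 2)%R)%:E =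
  (hellinger mu (pi t) (pi s) ^+ 2)%:E.
Proof.
set a := fun x => ((Num.sqrt (pi t x) - Num.sqrt (pi s x)) ^+ 2)%R.
have msqrt u : measurable_fun setT (fun x => Num.sqrt (pi u x)).
  exact: measurableT_comp (continuous_measurable_fun (@sqrt_continuous R))
    (measurable_pi u).
have ma : measurable_fun setT a.
  by apply: measurable_funX; apply: measurable_funB.
have a_le x : (a x <= 2 * pi t x + 2 * pi s x)%R.
  have eP := sqr_sqrtr (pi_ge0 t x); have eQ := sqr_sqrtr (pi_ge0 s x).
  rewrite /a -{2}eP -{2}eQ.
  have := sqr_ge0 (Num.sqrt (pi t x) + Num.sqrt (pi s x)); nra.
have Ia0 : 0 <= \int[mu]_x (a x)%:E.
  by apply: integral_ge0 => x _; rewrite lee_fin sqr_ge0.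
have Ia_le : \int[mu]_x (a x)%:E <= 4%:E.
  apply: le_trans (@ge0_le_integral _ _ _ mu setT measurableT (fun x => (a x)%:E)
     (fun x => 2%:E * (pi t x)%:E + 2%:E * (pi s x)%:E) _ _ _ _) _.
  - by move=> x _; rewrite lee_fin sqr_ge0.
  - exact/measurable_EFinP.
  - by apply: emeasurable_funD; apply: measurable_funeM;
      exact/measurable_EFinP/measurable_pi.
  - by move=> x _; rewrite -!EFinM -EFinD lee_fin.
  rewrite integralD//; last 2 first.
  - by apply: integrableZl => //; exact: integrable_pi.
  - by apply: integrableZl => //; exact: integrable_pi.
  rewrite !integralZl//; try exact: integrable_pi.
  by rewrite !integral_pi !mule1 -EFinD lee_fin; lra.
have Ia_fin : \int[mu]_x (a x)%:E \is a fin_num.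
  by rewrite ge0_fin_numE// (le_lt_trans Ia_le)// ltry.
by rewrite /hellinger sqr_sqrtr ?fineK// fine_ge0.
Qed.

Lemma integral_V2_pi_le t s :
  \int[mu]_x ((V x ^+ 2 * pi t x + V x ^+ 2 * pi s x)%R)%:E <= (2 * C)%:E.
Proof.
under eq_integral => x _ do rewrite EFinD.
rewrite ge0_integralD//.
- have -> : ((2 * C)%R)%:E = C%:E + C%:E by rewrite -EFinD; congr EFin; lra.
  by apply: leeD; exact: hV2.
- by move=> x _; rewrite lee_fin mulr_ge0 ?sqr_ge0 ?pi_ge0.
- apply/measurable_EFinP; apply: measurable_funM; last exact: measurable_pi.
  exact: measurable_funX.
- by move=> x _; rewrite lee_fin mulr_ge0 ?sqr_ge0 ?pi_ge0.
- apply/measurable_EFinP; apply: measurable_funM; last exact: measurable_pi.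
  exact: measurable_funX.
Qed.

Lemma integral_V_dist_le_AMGM t s l : (0 < l)%R ->
  \int[mu]_x (V x * `|pi t x - pi s x|)%:E <=
  (l / 2 * hellinger mu (pi t) (pi s) ^+ 2 + l^-1 * (2 * C))%:E.
Proof.
move=> l0; set P := pi t; set Q := pi s.
have mP : measurable_fun setT P by exact: measurable_pi.
have mQ : measurable_fun setT Q by exact: measurable_pi.
pose a x := ((Num.sqrt (P x) - Num.sqrt (Q x)) ^+ 2)%R.
pose b x := (V x ^+ 2 * P x + V x ^+ 2 * Q x)%R.
have ma : measurable_fun setT (fun x => (a x)%:E).
  apply/measurable_EFinP; apply: measurable_funX; apply: measurable_funB;
    exact: measurableT_comp (continuous_measurable_fun (@sqrt_continuous R)) _.
have mb : measurable_fun setT b.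
  by apply: measurable_funD; apply: measurable_funM => //; exact: measurable_funX.
have b0 x : (0 <= b x)%R by rewrite addr_ge0// mulr_ge0 ?sqr_ge0 ?pi_ge0.
apply: le_trans (@ge0_le_integral _ _ _ mu setT measurableT _
   (fun x => (l / 2)%:E * (a x)%:E + l^-1%:E * (b x)%:E) _ _ _ _) _.
- by move=> x _; rewrite lee_fin mulr_ge0 ?V_ge0.
- apply/measurable_EFinP; apply: measurable_funM => //.
  by apply: measurableT_comp => //; exact: measurable_funB.
- by apply: emeasurable_funD; apply: measurable_funeM => //; exact/measurable_EFinP.
- move=> x _; rewrite -!EFinM -EFinD lee_fin.
  exact: weighted_norm_sub_le (V_ge0 x) (pi_ge0 t x) (pi_ge0 s x) l0.
rewrite (@ge0_integralD _ _ _ mu setT measurableT); first last.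
- by apply: measurable_funeM; exact/measurable_EFinP.
- by move=> x _; rewrite -EFinM lee_fin mulr_ge0 ?b0// invr_ge0 ltW.
- exact: measurable_funeM.
- by move=> x _; rewrite -EFinM lee_fin mulr_ge0 ?sqr_ge0// divr_ge0// ltW.
rewrite !ge0_integralZl_EFin//; first last.
- by rewrite divr_ge0// ltW.
- by move=> x _; rewrite lee_fin sqr_ge0.
- by rewrite invr_ge0 ltW.
- exact/measurable_EFinP.
- by move=> x _; rewrite lee_fin.
rewrite integral_sqr_sub_sqrt_pi EFinD !EFinM leeD//.
by rewrite lee_wpmul2l ?integral_V2_pi_le// lee_fin invr_ge0 ltW.
Qed.

Lemma integral_V_dist_le_hellinger t s :
  \int[mu]_x (V x * `|pi t x - pi s x|)%:E <=
  (2 * Num.sqrt C * hellinger mu (pi t) (pi s))%:E.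
Proof.
set hel := hellinger mu (pi t) (pi s).
have I_fin : \int[mu]_x (V x * `|pi t x - pi s x|)%:E \is a fin_num.
  rewrite ge0_fin_numE; last first.
    by apply: integral_ge0 => x _; rewrite lee_fin mulr_ge0 ?V_ge0.
  by rewrite (le_lt_trans (integral_V_dist_le_AMGM t s ltr01)) ?ltry.
have -> : hel = Num.sqrt (hel ^+ 2) by rewrite sqrtr_sqr ger0_norm// sqrtr_ge0.
rewrite -(fineK I_fin) lee_fin.
apply: le_sqrt_of_forall_AMGM; rewrite ?sqr_ge0// => l l0.
by rewrite -lee_fin fineK//; exact: integral_V_dist_le_AMGM.
Qed.

Lemma densR_sub_le_hellinger s t r K : Vdominated r K ->
  (`|densR s r - densR t r| <= K * (2 * Num.sqrt C * hellinger mu (pi s) (pi t)))%R.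
Proof.
move=> hb; have [K0 mr hr] := hb.
rewrite -lee_fin -abse_EFin EFinB -(dens_intE s hb) -(dens_intE t hb) /dens_int.
rewrite -integralB//; last 2 first.
- exact: integrable_dens_Vdominated hb.
- exact: integrable_dens_Vdominated hb.
have mD : measurable_fun setT (fun x => (r x * pi s x)%:E - (r x * pi t x)%:E).
  by apply: emeasurable_funB; apply/measurable_EFinP; apply: measurable_funM => //;
    exact: measurable_pi.
have mdist : measurable_fun setT (fun x => (V x * `|pi s x - pi t x|)%:E).
  apply/measurable_EFinP; apply: measurable_funM => //.
  by apply: measurableT_comp => //; apply: measurable_funB; exact: measurable_pi.
apply: le_trans (le_abse_integral _ _ mD) _ => //.
apply: le_trans (@ge0_le_integral _ _ _ mu setT measurableT _
   (fun x => K%:E * (V x * `|pi s x - pi t x|)%:E) _ _ _ _) _.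
- by [].
- exact: measurableT_comp.
- exact: measurable_funeM.
- move=> x _; rewrite -EFinB -mulrBr /= -EFinM lee_fin normrM mulrA.
  by rewrite ler_wpM2r.
rewrite ge0_integralZl_EFin//; last by move=> x _; rewrite lee_fin mulr_ge0 ?V_ge0.
by rewrite EFinM lee_wpmul2l ?lee_fin// integral_V_dist_le_hellinger.
Qed.

Fixpoint error_bound t : R :=
  if t is t'.+1 then
    (rho t ^+ m t * (error_bound t' + 2 * Num.sqrt C * hellinger mu (pi t) (pi t')))%R
  else 0%R.

Lemma error_boundE t : error_bound t =
  (\sum_(1 <= s < t.+1) (\prod_(s <= u < t.+1) rho u ^+ m u) *
     (2 * Num.sqrt C * hellinger mu (pi s) (pi s.-1)))%R.
Proof.
elim: t => [|t IH]; first by rewrite big_geq.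
rewrite [error_bound _]/= IH (big_nat_recr t.+1)//= big_nat1 mulrDr mulr_sumr.
congr (_ + _)%R; apply: eq_big_nat => s /andP[s1 st].
by rewrite (big_nat_recr t.+1) /= 1?ltnW//; ring.
Qed.

Hypothesis hm : forall t, (1 <= t)%N -> (1 <= m t)%N.

(* In the step, T_{t+1}^{m_{t+1}} h is within K eps_{t+1} V of pi_{t+1}(h), so
   the induction hypothesis applies to it with K eps_{t+1}. *)
Lemma law_int_near_densR t (h : X -> R) (a K : R) : (0 < K)%R ->
  measurable_fun setT h -> (forall x, `|h x - a| <= K * V x)%R ->
  exists l : R, law_int mu (pi 0) T m t h = l%:E /\
                (`|l - densR t h| <= K * error_bound t)%R.
Proof.
elim: t h a K => [|t IH] h a K K0 mh hh.
  exists (densR 0 h); split; last by rewrite subrr normr0 mulr0.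
  rewrite -(dens_intE 0 (Vdominated_shift (ltW K0) mh hh)) /law_int /dens_int /=.
  by apply: eq_integral => x _; rewrite -EFinM mulrC.
have hb := Vdominated_shift (ltW K0) mh hh.
have t1 : (1 <= t.+1)%N by [].
have /andP[r0 _] := hrho t1.
set g := iter (m t.+1) (kopR t.+1) h; set c := densR t.+1 h.
have [_ mg _] : Vdominated g ((`|a| + K) * (1 + C) ^+ m t.+1).
  exact: Vdominated_iter_kopR.
have Ke : (0 < K * rho t.+1 ^+ m t.+1)%R by rewrite mulr_gt0// exprn_gt0.
have gc x : (`|g x - c| <= K * rho t.+1 ^+ m t.+1 * V x)%R.
  exact: iter_kopR_contract (hm t1) K0 mh hh x.
have [l [hl1 hl2]] := IH g c _ Ke mg gc.
exists l; split; first by rewrite -hl1 /law_int /= (kpowE _ t1 hb).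
have hbr : Vdominated (fun y => g y - c)%R (K * rho t.+1 ^+ m t.+1).
  by split; [exact: ltW|exact: measurable_funB|exact: gc].
have eg : g = (fun y => c + 1 * (g y - c))%R.
  by apply/funext => y; rewrite mul1r addrC subrK.
have r_mean0 : densR t.+1 (fun y => g y - c)%R = 0%R.
  have := densR_iter_kopR (m t.+1) t1 hb; rewrite -/g -/c {1}eg (densR_affine _ _ _ hbr).
  by move/(congr1 (fun z => z - c)%R); rewrite mul1r addrAC !subrr add0r.
have shift : (densR t g - c = densR t (fun y => g y - c) -
                              densR t.+1 (fun y => g y - c))%R.
  by rewrite {1}eg (densR_affine _ _ _ hbr) mul1r addrAC subrr add0r r_mean0 subr0.
rewrite -[l](subrK (densR t g)) -addrA; apply: le_trans (ler_normD _ _) _.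
rewrite shift [X in (_ + X)%R]distrC [error_bound _]/= mulrA mulrDr.
exact: lerD hl2 (densR_sub_le_hellinger _ _ hbr).
Qed.

Lemma Vnorm_law_le_error_bound t :
  Vnorm (law_int mu (pi 0) T m t) (dens_int mu (pi t)) (fun=> 1%R) <= (error_bound t)%:E.
Proof.
apply: ge_ereal_sup => _ [f [mf hf] <-].
have fV x : (`|f x - 0| <= 1 * V x)%R by rewrite subr0 mul1r (le_trans (hf x) (hV1 x)).
have [l [-> hl]] := law_int_near_densR t ltr01 mf fV.
have hbf : Vdominated f 1 by split => // x; rewrite mul1r (le_trans (hf x) (hV1 x)).
by rewrite (dens_intE t hbf) -EFinB /= lee_fin -(mul1r (error_bound t)).
Qed.

End geometric_ergodicity.

Theorem theorem4 (R : realType) (d : nat) (hd : (1 <= d)%N)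
  (mu : {measure set (d.-tuple R) -> \bar R}) (hmu : is_lebesgue mu)
  (pi : nat -> d.-tuple R -> R) (hpi : forall t, is_density mu (pi t))
  (T : nat -> R.-pker (d.-tuple R) ~> (d.-tuple R))
  (hstat : forall t, (1 <= t)%N -> stationary mu (T t) (pi t))
  (m : nat -> nat) (hm : forall t, (1 <= t)%N -> (1 <= m t)%N)
  (V : d.-tuple R -> R) (hVm : measurable_fun setT V) (hV1 : forall x, 1 <= V x)
  (C : R) (hC : 0 < C)
  (rho : nat -> R) (hrho : forall t, (1 <= t)%N -> 0 < rho t < 1)
  (hV2 : forall t, (\int[mu]_x ((V x ^+ 2 * pi t x)%:E) <= C%:E)%E)
  (hgeo : forall t x, (1 <= t)%N ->
     (Vnorm (ker_int (T t) x) (dens_int mu (pi t)) V <= (V x * rho t)%:E)%E) :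
  forall t, (1 <= t)%N ->
    (Vnorm (law_int mu (pi 0%N) T m t) (dens_int mu (pi t)) (fun _ => 1%R)
     <= ((\sum_(1 <= s < t.+1)
           (\prod_(s <= u < t.+1) rho u ^+ m u) *
           (2 * Num.sqrt C * hellinger mu (pi s) (pi s.-1)))%R)%:E)%E.
Proof.
move=> t _; rewrite -error_boundE.
exact: Vnorm_law_le_error_bound hpi hstat hVm hV1 hC hrho hV2 hgeo hm t.
Qed.
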